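(* Let $P\subset\mathbb R^2$ be an $\mathbb R$-$\Delta_2$-free polygon with rational diameter $l=1+2a>1$ (i.e. $a>0$), and suppose the segment $\mathrm{conv}((-a,0),(1+a,0))$ is contained in $P$. Then for every $b\in\mathbb Z$ the interior of $P$ is disjoint from the segments $\mathrm{conv}((b-a,1),(b+a,1))$ and $\mathrm{conv}((b-a,-1),(b+a,-1))$. In particular, if $a\ge\frac12$, then $P\subset\{(x,y): -1\le y\le 1\}$ and $\mathrm{width}(P)\le 2$.
   Context: A polygon is a two-dimensional convex polytope in $\mathbb R^2$. $\Delta_2=\mathrm{conv}(\mathbf 0,e_1,e_2)$. An $\mathbb R$-unimodular transformation is $T(x)=Mx+b$ with $M\in\mathrm{GL}_2(\mathbb Z)$, $b\in\mathbb R^2$; an $\mathbb R$-unimodular copy of $X$ is $T(X)$. A convex set is $\mathbb R$-$\Delta_2$-free if its relative interior contains no $\mathbb R$-unimodular copy of $\Delta_2$. The rational diameter of a convex body $K$ is $\max\{l\ge0: T(\mathrm{conv}(\mathbf 0,le_1))\subset K$ for some $\mathbb R$-unimodular $T\}$. Lattice width: $\mathrm{width}(K)=\inf_{u\in(\mathbb Z^2)^*\setminus\{0\}}\sup_{x,y\in K}|u(x)-u(y)|$. *)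

From HB Require Import structures.
From mathcomp Require Import all_boot all_order all_algebra.
From mathcomp Require Import all_classical all_reals all_analysis.
Set Implicit Arguments. Unset Strict Implicit. Unset Printing Implicit Defensive.
Import Order.TTheory GRing.Theory Num.Theory numFieldNormedType.Exports.
Local Open Scope classical_set_scope.
Local Open Scope ring_scope.

Section Defs.
Variable R : realType.
Notation pt := (R * R)%type.

Definition conv (s : seq pt) : set pt :=
  [set x | exists w : 'I_(size s) -> R,
     (forall i, 0 <= w i) /\ \sum_(i < size s) w i = 1 /\
     x = (\sum_(i < size s) w i * (nth (0,0) s i).1,
          \sum_(i < size s) w i * (nth (0,0) s i).2)].

Definition seg (p q : pt) : set pt := conv [:: p; q].

Definition is_polygon (P : set pt) : Prop :=
  (exists s : seq pt, P = conv s) /\ interior P !=set0.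

(* R-unimodular transformation x |-> M x + v with M = [[a b];[c d]] in GL_2(Z) *)
Definition unimodular (a b c d : int) : Prop :=
  a * d - b * c = 1 \/ a * d - b * c = -1.

Definition umap (a b c d : int) (v : pt) (x : pt) : pt :=
  (a%:~R * x.1 + b%:~R * x.2 + v.1, c%:~R * x.1 + d%:~R * x.2 + v.2).

Definition is_Runimod (T : pt -> pt) : Prop :=
  exists (a b c d : int) (v : pt), unimodular a b c d /\ T = umap a b c d v.

Definition Delta2 : set pt := conv [:: (0,0); (1,0); (0,1)].

(* for a polygon the relative interior is the interior *)
Definition Delta2_free_polygon (P : set pt) : Prop :=
  ~ exists T, is_Runimod T /\ T @` Delta2 `<=` interior P.

Definition is_rational_diameter (K : set pt) (l : R) : Prop :=
  0 <= l /\
  (exists T, is_Runimod T /\ T @` seg (0,0) (l,0) `<=` K) /\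
  (forall l', 0 <= l' -> (exists T, is_Runimod T /\ T @` seg (0,0) (l',0) `<=` K) ->
     l' <= l).

Definition width_dir (K : set pt) (u : int * int) : R :=
  sup [set `|(u.1%:~R * x.1 + u.2%:~R * x.2) - (u.1%:~R * y.1 + u.2%:~R * y.2)|
       | x in K & y in K].

Definition lattice_width (K : set pt) : R :=
  inf [set width_dir K u | u in [set u : int * int | u != (0, 0)]].

End Defs.

From Pilot Require Import Defs.
From HB Require Import structures.
From mathcomp Require Import all_boot all_order all_algebra.
From mathcomp Require Import all_classical all_reals all_analysis.
From mathcomp Require Import ring lra.
Set Implicit Arguments. Unset Strict Implicit. Unset Printing Implicit Defensive.

Import Order.TTheory GRing.Theory Num.Theory numFieldNormedType.Exports.
Local Open Scope classical_set_scope.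
Local Open Scope ring_scope.

(* If an interior point (c, ±1) of P lies within a of an integer b, the unimodular
   triangle with base [c - b, c - b + 1] x {0} and apex (c, ±1) lies in P, because its
   base lies in [-a, 1 + a] x {0}.  Since convex combinations with an interior point are
   interior, lifting the base slightly towards the apex yields a unimodular copy of
   Delta2 in the interior of P, contradicting Delta2-freeness.  When a >= 1/2 every
   real number is within a of an integer, so the lines y = ±1 miss the interior of P;
   by convexity P then lies in the strip |y| <= 1, whose width in direction (0, 1) is 2. *)

Section PlanarConvexity.
Variable R : realType.
Implicit Types (K P S : set (R * R)) (p q x z w : R * R).

Definition convex2 S := forall z w t, S z -> S w -> 0 <= t <= 1 ->
  S (t * z.1 + (1 - t) * w.1, t * z.2 + (1 - t) * w.2).

Lemma interior_boxP P z : interior P z <->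
  exists2 e : R, 0 < e & forall w, `|z.1 - w.1| < e -> `|z.2 - w.2| < e -> P w.
Proof.
rewrite /interior nbhs_ballP; split.
  by case=> e e0 Pe; exists e => // w h1 h2; apply: Pe; split; rewrite -ball_normE.
by case=> e e0 Pe; exists e => // w []; rewrite -!ball_normE; exact: Pe.
Qed.

Lemma conv_convex2 (s : seq (R * R)) : convex2 (Defs.conv s).
Proof.
move=> _ _ t [u [u0 [u1 ->]]] [v [v0 [v1 ->]]] /andP[t0 t1].
exists (fun i => t * u i + (1 - t) * v i); split.
  by move=> i; apply: addr_ge0; apply: mulr_ge0 => //; lra.
split; first by rewrite big_split /= -!mulr_sumr u1 v1; lra.
by congr (_, _); rewrite !mulr_sumr -big_split /=; apply: eq_bigr => i _; ring.
Qed.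

Lemma segP p q x : seg p q x <->
  exists2 t, 0 <= t <= 1 & x = ((1 - t) * p.1 + t * q.1, (1 - t) * p.2 + t * q.2).
Proof.
split.
  case=> w [w0 [+ ->]]; rewrite !big_ord_recl !big_ord0 /= !addr0 => w1.
  exists (w (lift ord0 ord0)); first by have := w0 ord0; have := w0 (lift ord0 ord0); lra.
  by have -> : w ord0 = 1 - w (lift ord0 ord0) by lra.
case=> t /andP[t0 t1] ->.
exists (fun i : 'I_2 => if val i == 0%N then 1 - t else t); split.
  by case=> [[|n]] _ /=; lra.
split; first by rewrite !big_ord_recl big_ord0 /=; lra.
by rewrite !big_ord_recl !big_ord0 /= !addr0.
Qed.

Lemma seg_horizontal (l r y s : R) : l < r -> l <= s <= r -> seg (l, y) (r, y) (s, y).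
Proof.
move=> lr ls; apply/segP; exists ((s - l) / (r - l)).
  by apply/andP; split; [apply: divr_ge0 | rewrite ler_pdivrMr ?mul1r]; lra.
have lr0 : r - l != 0 by rewrite subr_eq0 gt_eqF.
by congr (_, _); rewrite /=; field.
Qed.

(* The box of radius [t * e] around the combination is the image of the box of
   radius [e] around [z] under the homothety of centre [w] and ratio [t]. *)
Lemma interior_convex_comb P z w t : convex2 P -> interior P z -> P w -> 0 < t <= 1 ->
  interior P (t * z.1 + (1 - t) * w.1, t * z.2 + (1 - t) * w.2).
Proof.
move=> convexP /interior_boxP[e e0 boxz] Pw /andP[t0 t1]; apply/interior_boxP.
exists (t * e) => [|y h1 h2]; first exact: mulr_gt0.
have tn0 : t != 0 by rewrite gt_eqF.
pose z' := ((y.1 - (1 - t) * w.1) / t, (y.2 - (1 - t) * w.2) / t).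
have dist_z' (zi wi yi : R) : `|t * zi + (1 - t) * wi - yi| < t * e ->
    `|zi - (yi - (1 - t) * wi) / t| < e.
  have -> : zi - (yi - (1 - t) * wi) / t = (t * zi + (1 - t) * wi - yi) / t by field.
  by rewrite normrM normfV (gtr0_norm t0) ltr_pdivrMr // (mulrC e t).
have Pz' : P z' by apply: boxz; apply: dist_z'.
have := convexP z' w t Pz' Pw; rewrite t1 ltW //= => /(_ isT).
suff -> : (t * z'.1 + (1 - t) * w.1, t * z'.2 + (1 - t) * w.2) = y by [].
rewrite /z' /=; clear Pz' z'; case: y {h1 h2} => y1 y2 /=; by congr (_, _); field.
Qed.

Lemma convex2_interior P : convex2 P -> convex2 (interior P).
Proof.
move=> convexP z w t iz iw /andP[t0 t1].
have [->|tn0] := eqVneq t 0; first by rewrite !mul0r subr0 !mul1r !add0r; case: w iw.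
apply: interior_convex_comb => //; first exact: interior_subset.
by rewrite t1 lt_neqAle eq_sym tn0 t0.
Qed.

Lemma convex2_comb3 S p q x (u v w : R) : convex2 S -> S p -> S q -> S x ->
  0 <= u -> 0 <= v -> 0 <= w -> u + v + w = 1 ->
  S (u * p.1 + v * q.1 + w * x.1, u * p.2 + v * q.2 + w * x.2).
Proof.
move=> convexS Sp Sq Sx u0 v0 w0 uvw.
have [w1|wn1] := eqVneq w 1.
  have [-> ->] : u = 0 /\ v = 0 by lra.
  by rewrite w1 !mul0r !add0r !mul1r; case: x Sx.
have uv0 : 0 < u + v by rewrite lt_neqAle eq_sym; apply/andP; split; lra.
have uvn0 : u + v != 0 by rewrite gt_eqF.
set l := u / (u + v).
have Spq : S (l * p.1 + (1 - l) * q.1, l * p.2 + (1 - l) * q.2).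
  by apply: convexS => //; rewrite divr_ge0 ?ler_pdivrMr ?mul1r //=; lra.
have -> : (u * p.1 + v * q.1 + w * x.1, u * p.2 + v * q.2 + w * x.2) =
  ((u + v) * (l * p.1 + (1 - l) * q.1) + w * x.1,
   (u + v) * (l * p.2 + (1 - l) * q.2) + w * x.2).
  by rewrite /l; congr (_, _); rewrite /=; field.
rewrite (_ : w = 1 - (u + v)); last lra.
by apply: (convexS _ _ _ Spq Sx); apply/andP; split; lra.
Qed.

Lemma umap_Delta2_sub S (a b c d : int) v : convex2 S ->
  S (umap a b c d v (0, 0)) -> S (umap a b c d v (1, 0)) -> S (umap a b c d v (0, 1)) ->
  umap a b c d v @` (@Delta2 R) `<=` S.
Proof.
move=> convexS S0 S1 S2 _ [_ [w [w0 [+ ->]]] <-].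
rewrite !big_ord_recl !big_ord0 addr0 addrA => w1.
have := convex2_comb3 convexS S0 S1 S2 (w0 _) (w0 _) (w0 _) w1.
have -> : w ord0 = 1 - w (lift ord0 ord0) - w (lift ord0 (lift ord0 ord0)) by lra.
by congr S; rewrite /umap /=; congr (_, _); rewrite ?mulr1z ?mulr0z; ring.
Qed.

Lemma interior_meets_level P (i : R * R) w z (h : R) : convex2 P -> interior P i -> P w -> P z ->
  w.2 < h < z.2 -> exists c, interior P (c, h).
Proof.
move=> convexP iP Pw Pz hwz.
have comb x t : P x -> 0 < t <= 1 -> t * i.2 + (1 - t) * x.2 = h ->
    exists c, interior P (c, h).
  by move=> Px t01 <-; eexists; exact: interior_convex_comb convexP iP Px t01.
have [hi|ih] := leP i.2 h.
  apply: (comb z ((z.2 - h) / (z.2 - i.2))) => //; last by field; lra.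
  by apply/andP; split; [apply: divr_gt0 | rewrite ler_pdivrMr ?mul1r]; lra.
apply: (comb w ((h - w.2) / (i.2 - w.2))) => //; last by field; lra.
by apply/andP; split; [apply: divr_gt0 | rewrite ler_pdivrMr ?mul1r]; lra.
Qed.

Lemma width_dir_ge0 K (u : int * int) : 0 <= width_dir K u.
Proof.
rewrite /width_dir; set E := [set _ | _ in _ & _ in _].
have [supE|/sup_out->//] := pselect (has_sup E).
have [[y Ey] _] := supE; apply: le_trans (sup_upper_bound supE Ey).
by case: Ey => x _ [z _ <-].
Qed.

Lemma lattice_width_le_width_dir K (u : int * int) : u != (0, 0) -> lattice_width K <= width_dir K u.
Proof.
move=> u0; apply: ge_inf; last by exists u.
by exists 0 => _ [v _ <-]; exact: width_dir_ge0.
Qed.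

Lemma width_dir_strip K (lo hi : R) : K !=set0 -> K `<=` [set p | lo <= p.2 <= hi] ->
  width_dir K (0, 1) <= hi - lo.
Proof.
move=> [k Kk] Kstrip; apply: ge_sup.
  by exists 0; exists k => //; exists k => //; rewrite subrr normr0.
move=> _ [x Kx [y Ky <-]] /=.
have /andP[? ?] := Kstrip _ Kx; have /andP[? ?] := Kstrip _ Ky.
rewrite mulr1z mulr0z !mul0r !add0r ler_norml; apply/andP; split; lra.
Qed.

End PlanarConvexity.

Section LatticeRows.
Variables (R : realType) (P : set (R * R)) (a : R).
Hypotheses (convexP : convex2 P) (freeP : Delta2_free_polygon P).
Hypothesis baseP : forall x, - a <= x <= 1 + a -> P (x, 0).

Lemma interior_level_segment (c y t x : R) : interior P (c, y) -> 0 < t < 1 ->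
  t * c - (1 - t) * a <= x <= t * c + (1 - t) * (1 + a) -> interior P (x, t * y).
Proof.
move=> iq /andP[t0 t1] hx.
have tn0 : 1 - t != 0 by rewrite gt_eqF // subr_gt0.
have Pw : P ((x - t * c) / (1 - t), 0).
  by apply: baseP; apply/andP; split; [rewrite ler_pdivlMr | rewrite ler_pdivrMr];
    rewrite ?subr_gt0 //; lra.
have := interior_convex_comb convexP iq Pw (ltac:(lra) : 0 < t <= 1).
by congr (interior P); congr (_, _); rewrite /=; field.
Qed.

Lemma interior_row_far (sg b : int) (c : R) : 0 < a -> (sg = 1 \/ sg = -1) ->
  interior P (c, sg%:~R) -> a < `|c - b%:~R|.
Proof.
move=> a_gt0 hsg iq; rewrite ltNge; apply/negP; rewrite ler_norml => /andP[cb1 cb2].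
have /interior_boxP[e e0 boxq] := iq.
have [m [m0 [ma me]]] : exists m : R, 0 < m /\ 2 * m <= a /\ 2 * m < e.
  by have [ae|ea] := leP a e; [exists (a / 4) | exists (e / 4)]; lra.
set s : R := sg%:~R; set B : R := b%:~R.
have s_norm : `|s| = 1 by rewrite /s; case: hsg => ->; rewrite ?normrN normr1.
have [p [pd1 pd2 pa]] : exists p, [/\ `|p - (c - B)| <= m, - a + m <= p & p <= a - m].
  have [hd|hd] := leP 0 (c - B); [exists (c - B - m) | exists (c - B + m)];
    by split; rewrite ?ler_norml; try (apply/andP; split); lra.
have c_abs := normr_ge0 c.
have D_gt0 : 0 < `|c| + 1 + a by lra.
(* [m] is the margin kept from the ends of [[-a, a]]; lifting the base to height
   [t] shifts the segment of [interior_level_segment] by at most [m]. *)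
set t := m / (`|c| + 1 + a).
have tD : t * `|c| + t + t * a = m by rewrite /t; field; lra.
have t0 : 0 < t by rewrite divr_gt0.
have t01 : 0 < t < 1 by rewrite t0 /t ltr_pdivrMr ?mul1r //=; lra.
have /andP[tc1 tc2] : - (t * `|c|) <= t * c <= t * `|c|.
  by rewrite -ler_norml normrM gtr0_norm.
apply: freeP; exists (umap 1 b 0 sg (p, t * s)); split.
  by exists 1, b, 0, sg, (p, t * s); split; rewrite // /unimodular mul1r mulr0 subr0.
apply: umap_Delta2_sub; first exact: convex2_interior.
- rewrite /umap /= !mulr0 !add0r.
  by apply: (interior_level_segment iq) => //; lra.
- rewrite /umap /= mulr1z mulr0z !(mulr0, mul0r, mulr1, addr0, add0r) addrC.
  by apply: (interior_level_segment iq) => //; lra.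
- rewrite /umap /= mulr0z !(mulr0, mul0r, mulr1, add0r) -/s -/B; apply/interior_boxP.
  exists (e / 2) => [|y /= h1 h2]; first lra.
  apply: boxq => /=; rewrite distrC in pd1.
  + move: h1 pd1; rewrite !ler_norml !ltr_norml => /andP[? ?] /andP[? ?].
    by apply/andP; split; lra.
  + have ta : 0 <= t * a by rewrite mulr_ge0 // ltW.
    have : `|t * s| <= m by rewrite normrM s_norm mulr1 gtr0_norm //; lra.
    move: h2; rewrite -/s !ler_norml !ltr_norml => /andP[? ?] /andP[? ?].
    by apply/andP; split; lra.
Qed.

Lemma interior_row_segment (sg b : int) : 0 < a -> (sg = 1 \/ sg = -1) ->
  interior P `&` seg (b%:~R - a, sg%:~R) (b%:~R + a, sg%:~R) = set0.
Proof.
move=> a_gt0 hsg; apply/seteqP; split=> // z [+ /segP[t /andP[t0 t1] zt]].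
rewrite zt /=.
have -> : (1 - t) * sg%:~R + t * sg%:~R = sg%:~R :> R by ring.
move=> /(interior_row_far b a_gt0 hsg); rewrite ltNge ler_norml => /negP; apply.
by apply/andP; split; nra.
Qed.

Lemma subset_unit_strip : 1 / 2 <= a -> interior P !=set0 -> P `<=` [set p | -1 <= p.2 <= 1].
Proof.
move=> a_half [i iP] z Pz /=.
have a_gt0 : 0 < a by lra.
have P0 : P (0, 0) by apply: baseP; lra.
have no_row (sg : int) c : sg = 1 \/ sg = -1 -> ~ interior P (c, sg%:~R).
  move=> hsg /(interior_row_far (Num.floor (c + 1 / 2)) a_gt0 hsg); apply/negP; rewrite -leNgt.
  have := floor_itv (c + 1 / 2); rewrite intrD ler_norml => /andP[? ?].
  by apply/andP; split; lra.
rewrite !leNgt; apply/andP; split; apply/negP => hz.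
  have [c] := interior_meets_level convexP iP Pz P0 (ltac:(simpl; lra) : z.2 < -1 < 0).
  exact: (no_row (-1) c (or_intror erefl)).
have [c] := interior_meets_level convexP iP P0 Pz (ltac:(simpl; lra) : 0 < 1 < z.2).
exact: (no_row 1 c (or_introl erefl)).
Qed.

End LatticeRows.

Theorem lemma5p4 (R : realType) (P : set (R * R)) (a : R) :
  is_polygon P -> Delta2_free_polygon P -> 0 < a ->
  is_rational_diameter P (1 + 2 * a) ->
  seg (- a, 0) (1 + a, 0) `<=` P ->
  (forall b : int,
     interior P `&` seg (b%:~R - a, 1) (b%:~R + a, 1) = set0 /\
     interior P `&` seg (b%:~R - a, -1) (b%:~R + a, -1) = set0) /\
  (1 / 2 <= a ->
     P `<=` [set p | -1 <= p.2 <= 1] /\ lattice_width P <= 2).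
Proof.
move=> [[s Pe] intP] freeP a_gt0 _ segP0.
have convexP : convex2 P by rewrite Pe; exact: conv_convex2.
have baseP x : - a <= x <= 1 + a -> P (x, 0).
  by move=> hx; apply: segP0; apply: seg_horizontal => //; lra.
split=> [b|a_half].
  by split; [exact: (interior_row_segment convexP freeP baseP b a_gt0 (or_introl erefl))
            | exact: (interior_row_segment convexP freeP baseP b a_gt0 (or_intror erefl))].
have stripP := subset_unit_strip convexP freeP baseP a_half intP.
split=> //; apply: le_trans (@lattice_width_le_width_dir _ P (0, 1) isT) _.
have -> : 2 = 1 - (-1) :> R by lra.
by apply: width_dir_strip stripP; exists (0, 0); apply: baseP; lra.
Qed.
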